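(* Consider a finite population of $C$ clusters, where cluster $c\in\{1,\dots,C\}$ contains $N_c$ units, with fixed potential outcomes $Y_{ci}(1),Y_{ci}(0)$ for unit $i\in\{1,\dots,N_c\}$ of cluster $c$. Let $N=\sum_{c=1}^C N_c$, $\bar N=N/C$, and define the scaled quantities $\widetilde Y_{ci}(d)=Y_{ci}(d)/\bar N$, $\widetilde Y_c(d)=\sum_{i=1}^{N_c}\widetilde Y_{ci}(d)$, $\bar{\widetilde Y}_c(d)=\widetilde Y_c(d)/N_c$, $\bar Y(d)=\frac1C\sum_{c=1}^C\widetilde Y_c(d)$ for $d\in\{0,1\}$, $\tau_c=\widetilde Y_c(1)-\widetilde Y_c(0)$, and $$\tau=\frac1N\sum_{c=1}^C\sum_{i=1}^{N_c}\big(Y_{ci}(1)-Y_{ci}(0)\big)=\frac1C\sum_{c=1}^C\tau_c .$$ The random design is as follows: $S$ of the $C$ clusters are drawn by simple random sampling without replacement ($R_c=1$ if cluster $c$ is drawn); independently of this, $S_1$ of the $S$ drawn clusters are assigned to treatment by complete randomization without replacement ($D_c=1$ treated, $D_c=0$ control; $S_0=S-S_1$); and, independently of both, within each cluster $c$ a simple random sample without replacement of $n_c$ of its $N_c$ units is drawn ($R_{i\mid c}=1$ if unit $i$ of cluster $c$ is drawn). Let $p=S/C$, $q=S_1/S$, $\pi_c=n_c/N_c$, $\tilde\pi_c=(n_c-1)/(N_c-1)$, and observed outcome $Y_{ci}=D_cY_{ci}(1)+(1-D_c)Y_{ci}(0)$ with $\widetilde Y_c=D_c\widetilde Y_c(1)+(1-D_c)\widetilde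 Y_c(0)$. Define $$\bar\tau=\frac1C\sum_{c=1}^C\Big[\frac{R_cD_c\widetilde Y_c}{pq}-\frac{R_c(1-D_c)\widetilde Y_c}{p(1-q)}\Big],\qquad \widehat\tau=\frac1N\sum_{c=1}^C\Big[\frac{R_cD_c}{pq}\sum_{i=1}^{N_c}\frac{R_{i\mid c}Y_{ci}}{\pi_c}-\frac{R_c(1-D_c)}{p(1-q)}\sum_{i=1}^{N_c}\frac{R_{i\mid c}Y_{ci}}{\pi_c}\Big].$$ Suppose $p\in(0,1]$ and $q\in(0,1)$. Then $\mathbb E[\bar\tau]=\tau$ and $\mathbb E[\widehat\tau]=\tau$, and $$\mathrm{Var}(\bar\tau)=\frac1C\Big\{\frac{\frac{1}{C-1}\sum_{c=1}^C(\widetilde Y_c(1)-\bar Y(1))^2}{pq}+\frac{\frac{1}{C-1}\sum_{c=1}^C(\widetilde Y_c(0)-\bar Y(0))^2}{p(1-q)}-\frac{1}{C-1}\sum_{c=1}^C(\tau_c-\tau)^2\Big\}.$$ Moreover, if $\pi_c\in(0,1]$ for all $c$, then $$\mathrm{Var}(\widehat\tau)=\mathrm{Var}(\bar\tau)+\frac{1}{C^2}\sum_{c=1}^C\frac{(1-\pi_c)(1-\tilde\pi_c)}{\pi_c(\pi_c-\tilde\pi_c)}\Big(\frac{\frac{1}{N_c-1}\sum_{i=1}^{N_c}(\widetilde Y_{ci}(1)-\bar{\widetilde Y}_c(1))^2}{pq}+\frac{\frac{1}{N_c-1}\sum_{i=1}^{N_c}(\widetilde Y_{ci}(0)-\bar{\widetilde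 Y}_c(0))^2}{p(1-q)}\Big),$$ where $\mathrm{Var}(\bar\tau)$ denotes the expression displayed above.
   Context: All expectations and variances are taken over the randomness of the design (cluster sampling, treatment assignment, within-cluster unit sampling); potential outcomes, $C$, $N_c$, $n_c$, $S$, $S_1$ are fixed and known. Sampling indicators $R_{i\mid c}$ may be regarded as defined for every cluster (only those with $R_c=1$ are observed). *)

From HB Require Import structures.
From mathcomp Require Import all_boot all_order all_algebra.
Set Implicit Arguments. Unset Strict Implicit. Unset Printing Implicit Defensive.
Import Order.TTheory GRing.Theory Num.Theory.
Local Open Scope ring_scope.

Section Design.
Variable R : realFieldType.
Variable C : nat.
Variable N : 'I_C -> nat.

Definition unit_t := {c : 'I_C & 'I_(N c)}.
Definition unit_of (c : 'I_C) (i : 'I_(N c)) : unit_t := Tagged (fun c => 'I_(N c)) i.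

(* an outcome of the design: (sampled clusters R, treated clusters D, sampled units W) *)
Definition outcome := ({set 'I_C} * {set 'I_C} * {set unit_t})%type.
Definition Rset (w : outcome) := w.1.1.
Definition Dset (w : outcome) := w.1.2.
Definition Wset (w : outcome) := w.2.

(* support of the design: SRS of S clusters; complete randomization of S1 of
   the S drawn clusters to treatment; independently, in every cluster c an
   SRS of n_c of its N_c units.  The design is the uniform distribution on it
   (equivalently the product of the three independent uniform designs). *)
Definition design (S S1 : nat) (n : 'I_C -> nat) : {set outcome} :=
  [set w : outcome | [&& #|Rset w| == S, Dset w \subset Rset w, #|Dset w| == S1
     & [forall c : 'I_C, #|[set u in Wset w | tag u == c]| == n c]]].

Definition Exp (S S1 : nat) (n : 'I_C -> nat) (X : outcome -> R) : R :=
  (\sum_(w in design S S1 n) X w) / #|design S S1 n|%:R.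

Definition Var (S S1 : nat) (n : 'I_C -> nat) (X : outcome -> R) : R :=
  Exp S S1 n (fun w => (X w - Exp S S1 n X) ^+ 2).

Definition ind (b : bool) : R := (b : nat)%:R.

Definition Ntot : R := \sum_(c < C) (N c)%:R.
Definition Nbar : R := Ntot / C%:R.
Definition Yt (Y : forall c : 'I_C, 'I_(N c) -> R) (c : 'I_C) (i : 'I_(N c)) : R := Y c i / Nbar.
Definition YtC (Y : forall c : 'I_C, 'I_(N c) -> R) (c : 'I_C) : R := \sum_(i < N c) @Yt Y c i.
Definition YtCbar (Y : forall c : 'I_C, 'I_(N c) -> R) (c : 'I_C) : R := YtC Y c / (N c)%:R.
Definition Ybar (Y : forall c : 'I_C, 'I_(N c) -> R) : R := (\sum_(c < C) YtC Y c) / C%:R.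
Definition tau_c (Y1 Y0 : forall c : 'I_C, 'I_(N c) -> R) (c : 'I_C) : R := YtC Y1 c - YtC Y0 c.
Definition tau (Y1 Y0 : forall c : 'I_C, 'I_(N c) -> R) : R :=
  Ntot^-1 * \sum_(c < C) \sum_(i < N c) (Y1 c i - Y0 c i).

Definition p_ (S : nat) : R := S%:R / C%:R.
Definition q_ (S S1 : nat) : R := S1%:R / S%:R.
Definition pi_ (n : 'I_C -> nat) (c : 'I_C) : R := (n c)%:R / (N c)%:R.
Definition pit_ (n : 'I_C -> nat) (c : 'I_C) : R := ((n c)%:R - 1) / ((N c)%:R - 1).

Definition taubar (S S1 : nat) (Y1 Y0 : forall c : 'I_C, 'I_(N c) -> R) (w : outcome) : R :=
  C%:R^-1 * \sum_(c < C)
    (let Rc := ind (c \in Rset w) in let Dc := ind (c \in Dset w) in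
     let Ytc := Dc * YtC Y1 c + (1 - Dc) * YtC Y0 c in
     Rc * Dc * Ytc / (p_ S * q_ S S1) - Rc * (1 - Dc) * Ytc / (p_ S * (1 - q_ S S1))).

Definition tauhat (S S1 : nat) (n : 'I_C -> nat) (Y1 Y0 : forall c : 'I_C, 'I_(N c) -> R)
    (w : outcome) : R :=
  Ntot^-1 * \sum_(c < C)
    (let Rc := ind (c \in Rset w) in let Dc := ind (c \in Dset w) in
     let Ysum := \sum_(i < N c)
        ind (unit_of i \in Wset w) * (Dc * Y1 c i + (1 - Dc) * Y0 c i) / pi_ n c in
     Rc * Dc / (p_ S * q_ S S1) * Ysum - Rc * (1 - Dc) / (p_ S * (1 - q_ S S1)) * Ysum).

Definition var_taubar_formula (S S1 : nat) (Y1 Y0 : forall c : 'I_C, 'I_(N c) -> R) : R :=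
  C%:R^-1 * (
    ((C%:R - 1)^-1 * \sum_(c < C) (YtC Y1 c - Ybar Y1) ^+ 2) / (p_ S * q_ S S1)
  + ((C%:R - 1)^-1 * \sum_(c < C) (YtC Y0 c - Ybar Y0) ^+ 2) / (p_ S * (1 - q_ S S1))
  - (C%:R - 1)^-1 * \sum_(c < C) (tau_c Y1 Y0 c - tau Y1 Y0) ^+ 2).

Definition within_term (S S1 : nat) (n : 'I_C -> nat) (Y1 Y0 : forall c : 'I_C, 'I_(N c) -> R) : R :=
  (C%:R ^+ 2)^-1 * \sum_(c < C)
    ((1 - pi_ n c) * (1 - pit_ n c) / (pi_ n c * (pi_ n c - pit_ n c)) *
     ( (((N c)%:R - 1)^-1 * \sum_(i < N c) (@Yt Y1 c i - YtCbar Y1 c) ^+ 2) / (p_ S * q_ S S1)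
     + (((N c)%:R - 1)^-1 * \sum_(i < N c) (@Yt Y0 c i - YtCbar Y0 c) ^+ 2) / (p_ S * (1 - q_ S S1)))).

End Design.

(* The design is uniform on a product: the cluster design (which clusters are
   sampled, which of them treated) times the within-cluster sampling design.
   Hence expectations factor, and the law of total variance splits Var(tauhat)
   into the variance of its conditional mean, which is taubar, plus the mean of
   its conditional variance.  Every variance then follows from one fact about
   exchangeable indicators: if the joint law of two families (alpha_i), (beta_i)
   of n indicators is invariant under transpositions of indices and sum_i beta_i
   is constant, then Cov(alpha_i, beta_j) is some d for i = j and -d/(n-1)
   otherwise (each row sums to 0), so
     Cov(sum_i a_i alpha_i, sum_j b_j beta_j) = d n/(n-1) sum_i (a_i - mean a)(b_i - mean b).
   For the treated and control arms of the clusters this is Neyman's variance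
   of taubar; for the sampled units of each cluster, uncorrelated across
   clusters by the same symmetry, it is the within-cluster term. *)

From mathcomp Require Import all_boot all_order all_algebra.
From mathcomp Require Import perm ring.
Set Implicit Arguments. Unset Strict Implicit. Unset Printing Implicit Defensive.
Import Order.TTheory GRing.Theory Num.Theory.
Local Open Scope ring_scope.

Section ExchangeableMatrix.
Variables (R : realFieldType) (I : finType).
Local Notation n := (#|I|%:R : R).
Local Notation mean a := ((\sum_k a k) / n).

Lemma sum_centered_mul (a b : I -> R) : n != 0 ->
  \sum_i (a i - mean a) * (b i - mean b) = \sum_i a i * b i - (\sum_i a i) * (\sum_i b i) / n.
Proof.
move=> n0.
under eq_bigr do rewrite mulrBl !mulrBr.
rewrite !sumrB -!big_distrr -!big_distrl /= sumr_const -[_ *+ #|I|]mulr_natl.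
by field.
Qed.

Lemma sum_exchangeable_matrix (M : I -> I -> R) (d : R) (a b : I -> R) :
  (forall i, M i i = d) ->
  (forall i j j', j != i -> j' != i -> M i j = M i j') ->
  (forall i, \sum_j M i j = 0) ->
  \sum_i \sum_j M i j * (a i * b j) =
  d * n / (n - 1) * \sum_i (a i - mean a) * (b i - mean b).
Proof.
move=> Mii Mij rowM.
have [I1 | I2] := leqP #|I| 1.
  have /fintype_le1P Ieq := I1.
  rewrite big1 => [|i _]; last first.
    rewrite (eq_bigr (fun j => M i j * (a i * b i))) => [|j _]; last by rewrite (Ieq i j).
    by rewrite -big_distrl /= rowM mul0r.
  (* the right side vanishes too, since (1 - 1)^-1 = 0 *)
  by case: #|I| I1 => [|[|]] //= _; rewrite ?subrr ?invr0 !(mulr0, mul0r).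
have n1 : n - 1 != 0 by rewrite subr_eq0 pnatr_eq1 gtn_eqF.
have n0 : n != 0 by rewrite pnatr_eq0 -lt0n ltnW.
have sum_off (u : I -> R) i : \sum_(j | j != i) u j = \sum_j u j - u i.
  by rewrite [in RHS](bigD1 i) //= addrAC subrr add0r.
have off i j : j != i -> M i j = - d / (n - 1).
  move=> ji; apply: (canRL (mulfK n1)); apply/eqP; rewrite -addr_eq0 addrC.
  have := rowM i; rewrite (bigD1 i) //= Mii (eq_bigr (fun=> M i j)) => [|j' j'i]; last exact: Mij.
  by rewrite sumr_const cardC1 -[M i j *+ _]mulr_natr -subn1 natrB ?(ltnW I2) // => ->.
have row i : \sum_j M i j * (a i * b j) =
    (d + d / (n - 1)) * (a i * b i) - d / (n - 1) * (a i * \sum_j b j).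
  rewrite (bigD1 i) //= Mii (eq_bigr (fun j => - (d / (n - 1) * a i) * b j)) => [|j ji]; last first.
    by rewrite off //; ring.
  by rewrite -big_distrr /= sum_off; ring.
rewrite sum_centered_mul // (eq_bigr _ (fun i _ => row i)).
rewrite sumrB -!big_distrr -big_distrl /=.
by field; apply/andP.
Qed.
End ExchangeableMatrix.

Section UniformAverage.
Variables (R : realFieldType) (T : finType) (A : {set T}).

Definition avg (f : T -> R) : R := (\sum_(x in A) f x) / #|A|%:R.
Definition cov (f g : T -> R) : R := avg (fun x => f x * g x) - avg f * avg g.

Lemma eq_avg (f g : T -> R) : {in A, f =1 g} -> avg f = avg g.
Proof. by move=> fg; rewrite /avg (eq_bigr _ fg). Qed.

Lemma avgD (f g : T -> R) : avg (fun x => f x + g x) = avg f + avg g.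
Proof. by rewrite /avg big_split mulrDl. Qed.

Lemma avgB (f g : T -> R) : avg (fun x => f x - g x) = avg f - avg g.
Proof. by rewrite /avg sumrB mulrBl. Qed.

Lemma avgZ (k : R) (f : T -> R) : avg (fun x => k * f x) = k * avg f.
Proof. by rewrite /avg -big_distrr mulrA. Qed.

Lemma avg_sum (I : finType) (F : I -> T -> R) :
  avg (fun x => \sum_i F i x) = \sum_i avg (F i).
Proof. by rewrite /avg exchange_big big_distrl. Qed.

Lemma avg_cst (k : R) : A != set0 -> avg (fun=> k) = k.
Proof.
move=> A0; rewrite /avg sumr_const -[k *+ _]mulr_natl mulrC mulKf //.
by rewrite pnatr_eq0 cards_eq0.
Qed.

Lemma avg_invol (h : T -> T) (f : T -> R) :
  involutive h -> {in A, forall x, h x \in A} -> avg (fun x => f (h x)) = avg f.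
Proof.
move=> hK hA; congr (_ / _); rewrite [RHS](reindex_inj (inv_inj hK)) /=.
apply: eq_bigl => x; apply/idP/idP => [/hA|/hA]; by rewrite ?hK.
Qed.

Lemma eq_cov (f f' g g' : T -> R) : {in A, f =1 f'} -> {in A, g =1 g'} -> cov f g = cov f' g'.
Proof.
move=> ff' gg'; rewrite /cov (eq_avg ff') (eq_avg gg'); congr (_ - _).
by apply: eq_avg => x xA; rewrite ff' ?gg'.
Qed.

Lemma covE (f g : T -> R) : A != set0 ->
  cov f g = avg (fun x => (f x - avg f) * (g x - avg g)).
Proof.
move=> A0; rewrite /cov.
under [RHS]eq_avg do rewrite mulrBl !mulrBr.
rewrite !avgB avgZ [avg (fun x => _ * avg g)](eq_avg (g := fun x => avg g * f x)).
  by rewrite avgZ avg_cst //; ring.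
by move=> x _; rewrite mulrC.
Qed.

Lemma cov_sumr (I : finType) (f : T -> R) (G : I -> T -> R) :
  cov f (fun x => \sum_i G i x) = \sum_i cov f (G i).
Proof.
rewrite /cov; under eq_avg do rewrite big_distrr.
by rewrite !avg_sum big_distrr -sumrB.
Qed.

Lemma covC (f g : T -> R) : cov f g = cov g f.
Proof. by rewrite /cov mulrC; under eq_avg do rewrite mulrC. Qed.

Lemma covZl (k : R) (f g : T -> R) : cov (fun x => k * f x) g = k * cov f g.
Proof.
rewrite /cov avgZ (eq_avg (g := fun x => k * (f x * g x))) ?avgZ; first by ring.
by move=> x _; rewrite mulrA.
Qed.

Lemma covBl (f g h : T -> R) : cov (fun x => f x - g x) h = cov f h - cov g h.
Proof.
rewrite /cov avgB (eq_avg (g := fun x => f x * h x - g x * h x)) ?avgB; first by ring.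
by move=> x _; rewrite mulrBl.
Qed.

Lemma covBr (f g h : T -> R) : cov f (fun x => g x - h x) = cov f g - cov f h.
Proof. by rewrite covC covBl !(covC f). Qed.

Lemma cov_suml (I : finType) (F : I -> T -> R) (g : T -> R) :
  cov (fun x => \sum_i F i x) g = \sum_i cov (F i) g.
Proof. by rewrite covC cov_sumr; under eq_bigr do rewrite covC. Qed.

Lemma cov_lin (I J : finType) (a : I -> R) (b : J -> R) (F : I -> T -> R) (G : J -> T -> R) :
  cov (fun x => \sum_i a i * F i x) (fun x => \sum_j b j * G j x) =
  \sum_i \sum_j cov (F i) (G j) * (a i * b j).
Proof.
rewrite cov_suml; apply: eq_bigr => i _; rewrite covZl cov_sumr big_distrr /=.
apply: eq_bigr => j _; rewrite covC covZl covC; ring.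
Qed.

Lemma cov_cstr (f : T -> R) (g : T -> R) (k : R) :
  A != set0 -> {in A, forall x, g x = k} -> cov f g = 0.
Proof.
move=> A0 gk; rewrite /cov (eq_avg gk) avg_cst //.
rewrite (eq_avg (g := fun x => k * f x)) ?avgZ 1?mulrC ?subrr // => x xA.
by rewrite gk // mulrC.
Qed.

Lemma avg_exchangeable (I : finType) (F : I -> T -> R) (g : T -> R) (k : R) i :
  (forall j, avg (F j) = avg (F i)) -> {in A, forall x, \sum_j F j x = k * g x} ->
  #|I|%:R * avg (F i) = k * avg g.
Proof.
move=> Fi sumF; rewrite -[RHS]avgZ -(eq_avg sumF) avg_sum.
by rewrite (eq_bigr _ (fun j _ => Fi j)) sumr_const mulr_natl.
Qed.

Lemma cov_exchangeable (I : finType) (F G : I -> T -> R) (a b : I -> R) (d k : R) :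
  A != set0 ->
  (forall i, cov (F i) (G i) = d) ->
  (forall i j j', j != i -> j' != i -> cov (F i) (G j) = cov (F i) (G j')) ->
  {in A, forall x, \sum_j G j x = k} ->
  cov (fun x => \sum_i a i * F i x) (fun x => \sum_j b j * G j x) =
  d * #|I|%:R / (#|I|%:R - 1) *
  \sum_i (a i - (\sum_l a l) / #|I|%:R) * (b i - (\sum_l b l) / #|I|%:R).
Proof.
move=> A0 diag offdiag sumG; rewrite cov_lin; apply: sum_exchangeable_matrix => // i.
by rewrite -cov_sumr (cov_cstr _ A0 sumG).
Qed.

End UniformAverage.

Section ProductDesign.
Variables (R : realFieldType) (T U : finType) (A : {set T}) (B : {set U}).

Lemma avg_setX (F : T * U -> R) :
  avg (setX A B) F = avg A (fun x => avg B (fun y => F (x, y))).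
Proof.
rewrite /avg (eq_bigl (fun p => (p.1 \in A) && (p.2 \in B))) => [|[x y]]; last first.
  by rewrite in_setX.
rewrite (eq_bigr (fun p => F (p.1, p.2))) => [|[] //].
rewrite -(pair_big _ _ (fun x y => F (x, y))) /= cardsX natrM invfM mulrA mulrAC; congr (_ * _).
by rewrite big_distrl.
Qed.

Lemma cov_setX (F G : T * U -> R) :
  cov (setX A B) F G =
  avg A (fun x => cov B (fun y => F (x, y)) (fun y => G (x, y))) +
  cov A (fun x => avg B (fun y => F (x, y))) (fun x => avg B (fun y => G (x, y))).
Proof. by rewrite /cov !avg_setX avgB; ring. Qed.

Lemma avg_setX_fst (f : T -> R) : B != set0 -> avg (setX A B) (fun p => f p.1) = avg A f.
Proof. by move=> B0; rewrite avg_setX; apply: eq_avg => x _ /=; rewrite avg_cst. Qed.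

Lemma cov_setX_fst (f g : T -> R) : B != set0 ->
  cov (setX A B) (fun p => f p.1) (fun p => g p.1) = cov A f g.
Proof. by move=> B0; rewrite /cov !(avg_setX_fst _ B0) (avg_setX_fst (fun x => f x * g x)). Qed.

End ProductDesign.

Lemma sum_ind (R : realFieldType) (T : finType) (A : {pred T}) :
  \sum_t ind R (t \in A) = #|A|%:R.
Proof.
rewrite -sum1_card natr_sum [RHS]big_mkcond /=; apply: eq_bigr => t _.
by rewrite /ind; case: (t \in A).
Qed.

Lemma card_ord_lt m k : (k <= m)%N -> #|[set i : 'I_m | (i < k)%N]| = k.
Proof.
move=> km; have widen_inj : injective (widen_ord km) by move=> i j /(congr1 val) /= /val_inj.
transitivity #|widen_ord km @: 'I_k|; last by rewrite card_imset ?card_ord.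
apply: eq_card => i.
rewrite inE; apply/idP/imsetP => [ik | [j _ ->]]; last exact: (ltn_ord j).
by exists (Ordinal ik) => //; apply: val_inj.
Qed.

Section ClusterDesign.
Variables (R : realFieldType) (C S S1 : nat).
Hypotheses (S1_le_S : (S1 <= S)%N) (S_le_C : (S <= C)%N).

Definition cluster_design : {set {set 'I_C} * {set 'I_C}} :=
  [set x : {set 'I_C} * {set 'I_C} | [&& #|x.1| == S, x.2 \subset x.1 & #|x.2| == S1]].

Local Notation D := cluster_design.

(* For x = (R, D), [c \in arm true x] is R_c D_c and [c \in arm false x] is R_c (1 - D_c). *)
Definition arm (b : bool) (x : {set 'I_C} * {set 'I_C}) : {set 'I_C} :=
  if b then x.2 else x.1 :\: x.2.

Definition arm_size (b : bool) : nat := if b then S1 else (S - S1)%N.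

Definition in_arm (c : 'I_C) (b : bool) (x : {set 'I_C} * {set 'I_C}) : R := ind R (c \in arm b x).

Lemma card_arm x b : x \in D -> #|arm b x| = arm_size b.
Proof.
rewrite inE => /and3P[/eqP xS /setIidPr xDR /eqP xS1].
by case: b; rewrite /arm /arm_size ?cardsD ?xDR ?xS ?xS1.
Qed.

Lemma cluster_design_neq0 : D != set0.
Proof.
have S1_le_C := leq_trans S1_le_S S_le_C.
apply/set0Pn; exists ([set c : 'I_C | (c < S)%N], [set c : 'I_C | (c < S1)%N]).
rewrite inE /= !card_ord_lt // !eqxx andbT /=.
by apply/subsetP => c; rewrite !inE => /leq_trans; apply.
Qed.

Definition cluster_swap (c c' : 'I_C) (x : {set 'I_C} * {set 'I_C}) :=
  (tperm c c' @^-1: x.1, tperm c c' @^-1: x.2).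

Lemma cluster_swapK c c' : involutive (cluster_swap c c').
Proof. by case=> r d; congr pair; apply/setP => t; rewrite !inE tpermK. Qed.

Lemma cluster_swap_design c c' : {in D, forall x, cluster_swap c c' x \in D}.
Proof.
case=> r d; rewrite !inE /= !card_preimset; try exact: perm_inj.
by case/and3P=> -> /(preimsetS (tperm c c')) -> ->.
Qed.

Lemma in_arm_swap c c' c'' b x :
  in_arm c'' b (cluster_swap c c' x) = in_arm (tperm c c' c'') b x.
Proof. by case: b; rewrite /in_arm /arm !inE. Qed.

Local Notation pi b := ((arm_size b)%:R / C%:R : R).

Lemma avg_in_arm c b : avg D (in_arm c b) = pi b.
Proof.
have C0 : C%:R != 0 :> R by rewrite pnatr_eq0 -lt0n (leq_trans _ (ltn_ord c)).
rewrite mulrC; apply: (canRL (mulKf C0)).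
have := avg_exchangeable (A := D) (F := fun j => in_arm j b) (g := fun=> 1)
  (k := (arm_size b)%:R) (i := c).
rewrite card_ord avg_cst ?cluster_design_neq0 // mulr1; apply.
- move=> j; rewrite -(avg_invol _ (cluster_swapK c j) (@cluster_swap_design c j)).
  by apply: eq_avg => x _; rewrite in_arm_swap tpermR.
- by move=> x xD; rewrite sum_ind card_arm ?mulr1.
Qed.

Lemma in_arm_mul c b b' x : in_arm c b x * in_arm c b' x = (b == b')%:R * in_arm c b x.
Proof.
rewrite /in_arm /ind; case: b b' => -[]; rewrite /arm ?inE /=;
  by case: (c \in x.2); case: (c \in x.1) => /=; ring.
Qed.

Lemma cov_in_arm c b b' : cov D (in_arm c b) (in_arm c b') = (b == b')%:R * pi b - pi b * pi b'.
Proof. by rewrite /cov (eq_avg (fun x _ => in_arm_mul c b b' x)) avgZ !avg_in_arm. Qed.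

Lemma cov_in_arm_swap c j j' b b' : j != c -> j' != c ->
  cov D (in_arm c b) (in_arm j b') = cov D (in_arm c b) (in_arm j' b').
Proof.
move=> jc j'c; rewrite /cov !(avg_in_arm j) !(avg_in_arm j'); congr (_ - _).
rewrite -(avg_invol _ (cluster_swapK j j') (@cluster_swap_design j j')).
by apply: eq_avg => x _; rewrite !in_arm_swap tpermL tpermD // eq_sym.
Qed.

Lemma cov_arms (a a' : 'I_C -> R) b b' :
  cov D (fun x => \sum_c a c * in_arm c b x) (fun x => \sum_c a' c * in_arm c b' x) =
  ((b == b')%:R * pi b - pi b * pi b') * C%:R / (C%:R - 1) *
  \sum_c (a c - (\sum_l a l) / C%:R) * (a' c - (\sum_l a' l) / C%:R).
Proof.
rewrite (cov_exchangeable a a' (d := (b == b')%:R * pi b - pi b * pi b') (k := (arm_size b')%:R));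
  rewrite ?card_ord ?cluster_design_neq0 //.
- by move=> c; rewrite cov_in_arm.
- by move=> c j j'; apply: cov_in_arm_swap.
- by move=> x xD; rewrite sum_ind card_arm.
Qed.

Definition arm_contrast (u v : 'I_C -> R) (x : {set 'I_C} * {set 'I_C}) : R :=
  C%:R^-1 * (\sum_c u c * in_arm c true x - \sum_c v c * in_arm c false x).

Lemma avg_arm_contrast u v :
  avg D (arm_contrast u v) = C%:R^-1 * (pi true * \sum_c u c - pi false * \sum_c v c).
Proof.
rewrite avgZ avgB !avg_sum !big_distrr /=; congr (_ * (_ - _));
  by apply: eq_bigr => c _; rewrite avgZ avg_in_arm mulrC.
Qed.

Lemma var_arm_contrast u v :
  let su := \sum_c (u c - (\sum_l u l) / C%:R) * (u c - (\sum_l u l) / C%:R) in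
  let sv := \sum_c (v c - (\sum_l v l) / C%:R) * (v c - (\sum_l v l) / C%:R) in
  let suv := \sum_c (u c - (\sum_l u l) / C%:R) * (v c - (\sum_l v l) / C%:R) in
  cov D (arm_contrast u v) (arm_contrast u v) =
  C%:R^-1 ^+ 2 * C%:R / (C%:R - 1) *
  (pi true * (1 - pi true) * su + 2 * (pi true * pi false) * suv + pi false * (1 - pi false) * sv).
Proof.
rewrite /= /arm_contrast covZl covC covZl covBl !covBr (covC _ (fun x => \sum_c v c * _)).
rewrite !cov_arms /=; ring.
Qed.

End ClusterDesign.

Section UnitDesign.
Variables (R : realFieldType) (C : nat) (N n : 'I_C -> nat).
Hypothesis n_le_N : forall c, (n c <= N c)%N.

Definition unit_design : {set {set unit_t N}} :=
  [set W : {set unit_t N} | [forall c, #|[set u in W | tag u == c]| == n c]].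

Local Notation B := unit_design.
Local Notation pi := (pi_ R N n).

Definition sampled (u : unit_t N) (W : {set unit_t N}) : R := ind R (u \in W).

Lemma unit_of_inj c : injective (@unit_of C N c).
Proof. by move=> i j /(congr1 (tagged_as (unit_of i))); rewrite !tagged_asE. Qed.

Lemma card_units_in (W : {set unit_t N}) c :
  #|[set u in W | tag u == c]| = #|[set i : 'I_(N c) | unit_of i \in W]|.
Proof.
rewrite -[RHS](card_imset _ (@unit_of_inj c)); apply: eq_card => -[c' i].
rewrite !inE; apply/andP/imsetP => [[iW /eqP /= c'c] | [j]].
  by subst c'; exists i; rewrite ?inE.
by rewrite inE => jW ->; split => //=.
Qed.

Lemma sum_sampled W c : W \in B -> \sum_(i < N c) sampled (unit_of i) W = (n c)%:R.
Proof.
rewrite inE => /forallP /(_ c) /eqP; rewrite card_units_in => <-.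
by rewrite -sum_ind; apply: eq_bigr => i _; rewrite inE.
Qed.

Lemma unit_design_neq0 : B != set0.
Proof.
apply/set0Pn; exists [set u : unit_t N | (tagged u < n (tag u))%N].
rewrite inE; apply/forallP => c; rewrite card_units_in.
rewrite (_ : [set i | _] = [set i : 'I_(N c) | (i < n c)%N]) ?card_ord_lt //.
by apply/setP => i; rewrite !inE.
Qed.

Definition unit_swap (u v : unit_t N) (W : {set unit_t N}) := tperm u v @^-1: W.

Lemma unit_swapK u v : involutive (unit_swap u v).
Proof. by move=> W; apply/setP => t; rewrite !inE tpermK. Qed.

Lemma unit_swap_design u v : tag u = tag v -> {in B, forall W, unit_swap u v W \in B}.
Proof.
move=> uv W; rewrite !inE => /forallP WB; apply/forallP => c.
have -> : [set t in unit_swap u v W | tag t == c] = tperm u v @^-1: [set t in W | tag t == c].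
  by apply/setP => t; rewrite !inE; case: tpermP => // ->; rewrite uv.
by rewrite card_preimset //; apply: perm_inj.
Qed.

Lemma sampled_swap u v t W : sampled t (unit_swap u v W) = sampled (tperm u v t) W.
Proof. by rewrite /sampled inE. Qed.

Lemma avg_sampled_weighted c (i : 'I_(N c)) (g : {set unit_t N} -> R) :
  (forall (j : 'I_(N c)) W, g (unit_swap (unit_of i) (unit_of j) W) = g W) ->
  avg B (fun W => sampled (unit_of i) W * g W) = pi c * avg B g.
Proof.
move=> g_inv.
have N0 : (N c)%:R != 0 :> R by rewrite pnatr_eq0 -lt0n (leq_trans _ (ltn_ord i)).
rewrite /pi_ mulrAC mulrC; apply: (canRL (mulKf N0)).
have := avg_exchangeable (A := B) (F := fun j W => sampled (unit_of j) W * g W)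
  (g := g) (k := (n c)%:R) (i := i).
rewrite card_ord; apply.
- move=> j; rewrite -(avg_invol _ (unit_swapK (unit_of i) (unit_of j))
    (@unit_swap_design (unit_of i) (unit_of j) (erefl c))).
  by apply: eq_avg => W _; rewrite g_inv sampled_swap tpermR.
- by move=> W WB /=; rewrite -big_distrl sum_sampled.
Qed.

Lemma avg_sampled c (i : 'I_(N c)) : avg B (sampled (unit_of i)) = pi c.
Proof.
have := avg_sampled_weighted (g := fun=> 1) (i := i) (fun _ _ => erefl).
rewrite avg_cst ?unit_design_neq0 // mulr1 => <-.
by apply: eq_avg => W _; rewrite mulr1.
Qed.

Lemma avg_HT c (y : 'I_(N c) -> R) :
  avg B (fun W => \sum_i y i * sampled (unit_of i) W) = pi c * \sum_i y i.
Proof.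
rewrite avg_sum big_distrr; apply: eq_bigr => i _.
by rewrite avgZ avg_sampled mulrC.
Qed.

Lemma cov_sampled c (i : 'I_(N c)) :
  cov B (sampled (unit_of i)) (sampled (unit_of i)) = pi c * (1 - pi c).
Proof.
rewrite /cov (eq_avg (g := sampled (unit_of i))) ?avg_sampled; first by ring.
by move=> W _; rewrite /sampled /ind; case: (_ \in W); rewrite ?mulr0 ?mulr1.
Qed.

Lemma cov_sampled_swap c (i j j' : 'I_(N c)) : j != i -> j' != i ->
  cov B (sampled (unit_of i)) (sampled (unit_of j)) =
  cov B (sampled (unit_of i)) (sampled (unit_of j')).
Proof.
move=> ji j'i; rewrite /cov !avg_sampled; congr (_ - _).
rewrite -(avg_invol _ (unit_swapK (unit_of j) (unit_of j'))
  (@unit_swap_design (unit_of j) (unit_of j') (erefl c))).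
by apply: eq_avg => W _; rewrite !sampled_swap tpermL tpermD // (inj_eq (@unit_of_inj c)).
Qed.

Lemma cov_sampled_other c c' (i : 'I_(N c)) (j : 'I_(N c')) : c != c' ->
  cov B (sampled (unit_of i)) (sampled (unit_of j)) = 0.
Proof.
move=> cc'; rewrite /cov (avg_sampled_weighted (g := sampled (unit_of j))) ?avg_sampled ?subrr //.
by move=> i' W; rewrite sampled_swap tpermD //; apply: contraNneq cc' => /(congr1 tag) /= ->.
Qed.

Lemma var_HT_cluster c (y : 'I_(N c) -> R) :
  cov B (fun W => \sum_i y i * sampled (unit_of i) W)
        (fun W => \sum_i y i * sampled (unit_of i) W) =
  pi c * (1 - pi c) * (N c)%:R / ((N c)%:R - 1) *
  \sum_i (y i - (\sum_l y l) / (N c)%:R) * (y i - (\sum_l y l) / (N c)%:R).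
Proof.
rewrite (cov_exchangeable y y (d := pi c * (1 - pi c)) (k := (n c)%:R)) ?card_ord //.
- exact: unit_design_neq0.
- by move=> i; rewrite cov_sampled.
- by move=> i j j'; apply: cov_sampled_swap.
- by move=> W; apply: sum_sampled.
Qed.

Lemma var_HT (y : forall c, 'I_(N c) -> R) :
  cov B (fun W => \sum_c \sum_i y c i * sampled (unit_of i) W)
        (fun W => \sum_c \sum_i y c i * sampled (unit_of i) W) =
  \sum_c cov B (fun W => \sum_i y c i * sampled (unit_of i) W)
                (fun W => \sum_i y c i * sampled (unit_of i) W).
Proof.
rewrite cov_suml; apply: eq_bigr => c _; rewrite cov_sumr (bigD1 c) //= big1 ?addr0 // => c' c'c.
rewrite cov_lin big1 // => i _; rewrite big1 // => j _.
by rewrite cov_sampled_other ?mul0r // eq_sym.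
Qed.

End UnitDesign.

Lemma designE C (N n : 'I_C -> nat) S S1 :
  design N S S1 n = setX (cluster_design C S S1) (unit_design N n).
Proof. by apply/setP => -[[r d] W]; rewrite !inE /= !andbA. Qed.

Lemma ExpE (R : realFieldType) C (N n : 'I_C -> nat) S S1 (X : outcome N -> R) :
  Exp S S1 n X = avg (design N S S1 n) X.
Proof. by []. Qed.

Lemma VarE (R : realFieldType) C (N n : 'I_C -> nat) S S1 (X : outcome N -> R) :
  design N S S1 n != set0 -> Var S S1 n X = cov (design N S S1 n) X X.
Proof. by move=> D0; rewrite covE //; apply: eq_avg => w _; rewrite expr2. Qed.

Section CenteredSums.
Variables (R : realFieldType) (m : nat).
Local Notation mean y := ((\sum_l y l) / m%:R).

Lemma centered_divr (k : R) (y : 'I_m -> R) (i : 'I_m) :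
  y i / k - mean (fun l => y l / k) = (y i - mean y) / k.
Proof. by rewrite -big_distrl /=; ring. Qed.

Lemma sum_centered_divr (k k' : R) (y z : 'I_m -> R) :
  \sum_i (y i / k - mean (fun l => y l / k)) * (z i / k' - mean (fun l => z l / k')) =
  (\sum_i (y i - mean y) * (z i - mean z)) / (k * k').
Proof.
rewrite [RHS]big_distrl; apply: eq_bigr => i _ /=.
by rewrite !centered_divr invfM; ring.
Qed.

Lemma sum_sqrB (y z : 'I_m -> R) :
  \sum_i (y i - z i) ^+ 2 = \sum_i y i * y i - 2 * \sum_i y i * z i + \sum_i z i * z i.
Proof.
rewrite big_distrr -sumrB -big_split /=; apply: eq_bigr => i _; ring.
Qed.

Lemma sum_centered_mix (a b : R) (u v : 'I_m -> R) :
  a * b = 0 -> a * a = a -> b * b = b ->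
  \sum_i (a * u i - b * v i - mean (fun l => a * u l - b * v l)) *
         (a * u i - b * v i - mean (fun l => a * u l - b * v l)) =
  (\sum_i (u i - mean u) * (u i - mean u)) * a + (\sum_i (v i - mean v) * (v i - mean v)) * b.
Proof.
move=> ab a2 b2.
have -> : mean (fun l => a * u l - b * v l) = a * mean u - b * mean v.
  by rewrite sumrB -!big_distrr /=; ring.
move: (mean u) (mean v) => mu mv.
rewrite !big_distrl -big_split; apply: eq_bigr => i _ /=.
transitivity ((a * a) * (u i - mu) ^+ 2 - 2 * (a * b) * (u i - mu) * (v i - mv)
              + (b * b) * (v i - mv) ^+ 2); first by ring.
by rewrite ab a2 b2; ring.
Qed.

Lemma sum_sqr (y : 'I_m -> R) : \sum_i y i ^+ 2 = \sum_i y i * y i.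
Proof. by apply: eq_bigr => i _; rewrite expr2. Qed.

End CenteredSums.

Lemma HT_within_factor (R : realFieldType) (nc Nc : nat) : (0 < nc)%N -> (nc <= Nc)%N ->
  (1 - nc%:R / Nc%:R) * Nc%:R / (nc%:R / Nc%:R) =
  (1 - nc%:R / Nc%:R) * (1 - (nc%:R - 1) / (Nc%:R - 1)) /
    (nc%:R / Nc%:R * (nc%:R / Nc%:R - (nc%:R - 1) / (Nc%:R - 1))) :> R.
Proof.
move=> nc0 ncN.
have Nc0 : Nc%:R != 0 :> R by rewrite pnatr_eq0 -lt0n (leq_trans nc0).
have [ncNc | ltnN] := eqVneq nc Nc.
  by rewrite ncNc divff // subrr !mul0r.
have {ltnN ncN} ltnN : (nc < Nc)%N by rewrite ltn_neqAle ltnN.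
have nc0' : nc%:R != 0 :> R by rewrite pnatr_eq0 -lt0n.
have Nc1 : Nc%:R - 1 != 0 :> R by rewrite subr_eq0 pnatr_eq1 gtn_eqF // (leq_trans _ ltnN).
have Ncnc : Nc%:R - nc%:R != 0 :> R by rewrite subr_eq0 eqr_nat gtn_eqF.
(* pi - pit = (Nc - nc) / (Nc (Nc - 1)) *)
have E : nc%:R * (Nc%:R - 1) + - (nc%:R - 1) * Nc%:R = Nc%:R - nc%:R :> R by ring.
by field; rewrite E Nc0 Nc1 Ncnc nc0'.
Qed.

Section Population.
Variables (R : realFieldType) (C : nat) (N : 'I_C -> nat).
Hypothesis C_neq0 : C%:R != 0 :> R.

Lemma Nbar_mulC : Nbar R N * C%:R = Ntot R N.
Proof. by rewrite /Nbar divfK. Qed.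

Lemma Ybar_total (Y : forall c, 'I_(N c) -> R) :
  Ybar Y = (Ntot R N)^-1 * \sum_c \sum_i Y c i.
Proof.
rewrite /Ybar /YtC /Yt; under eq_bigr do rewrite -big_distrl.
by rewrite -big_distrl /= -[in RHS]Nbar_mulC [in RHS]invfM; ring.
Qed.

Lemma tauE (Y1 Y0 : forall c, 'I_(N c) -> R) : tau Y1 Y0 = Ybar Y1 - Ybar Y0.
Proof.
rewrite !Ybar_total /tau -mulrBr -sumrB; congr (_ * _).
by apply: eq_bigr => c _; rewrite sumrB.
Qed.

End Population.

Section Estimators.
Variables (R : realFieldType) (C : nat) (N : 'I_C -> nat).
Variables (Y1 Y0 : forall c, 'I_(N c) -> R) (S S1 : nat) (n : 'I_C -> nat).
Hypotheses (N_gt0 : forall c, (0 < N c)%N) (n_le_N : forall c, (n c <= N c)%N).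
Hypotheses (S_gt0 : (0 < S)%N) (S_le_C : (S <= C)%N) (S1_gt0 : (0 < S1)%N) (S1_lt_S : (S1 < S)%N).

Local Notation D := (cluster_design C S S1).
Local Notation B := (unit_design N n).
Local Notation pi1 := (p_ R C S * q_ R S S1).
Local Notation pi0 := (p_ R C S * (1 - q_ R S S1)).

Let C_neq0 : C%:R != 0 :> R.
Proof. by rewrite pnatr_eq0 -lt0n (leq_trans S_gt0). Qed.

Let S_neq0 : S%:R != 0 :> R.
Proof. by rewrite pnatr_eq0 -lt0n. Qed.

Let C1_neq0 : C%:R - 1 != 0 :> R.
Proof.
by rewrite subr_eq0 pnatr_eq1 gtn_eqF // (leq_trans _ S_le_C) // (leq_trans _ S1_lt_S).
Qed.

Let Nbar_neq0 : Nbar R N != 0.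
Proof.
rewrite /Nbar mulf_neq0 ?invr_eq0 // /Ntot -natr_sum pnatr_eq0 -lt0n.
by rewrite (bigD1 (Ordinal (leq_trans S_gt0 S_le_C))) //= addn_gt0 N_gt0.
Qed.

Lemma pi1E : pi1 = S1%:R / C%:R.
Proof. by rewrite /p_ /q_; field; rewrite S_neq0 C_neq0. Qed.

Lemma pi0E : pi0 = (S - S1)%N%:R / C%:R.
Proof. by rewrite /p_ /q_ natrB 1?ltnW //; field; rewrite S_neq0 C_neq0. Qed.

Lemma pi1_neq0 : pi1 != 0.
Proof. by rewrite pi1E mulf_neq0 ?invr_eq0 // pnatr_eq0 -lt0n. Qed.

Lemma pi0_neq0 : pi0 != 0.
Proof. by rewrite pi0E mulf_neq0 ?invr_eq0 // pnatr_eq0 subn_eq0 -ltnNge. Qed.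

Lemma design_neq0 : design N S S1 n != set0.
Proof.
rewrite designE; apply/set0Pn.
have /set0Pn[x xD] := cluster_design_neq0 (ltnW S1_lt_S) S_le_C.
have /set0Pn[W WB] := unit_design_neq0 n_le_N.
by exists (x, W); rewrite in_setX xD.
Qed.

Definition taubar_cluster : {set 'I_C} * {set 'I_C} -> R :=
  arm_contrast (fun c => YtC Y1 c / pi1) (fun c => YtC Y0 c / pi0).

Lemma taubar_on_design w : w \in design N S S1 n ->
  taubar S S1 Y1 Y0 w = taubar_cluster w.1.
Proof.
rewrite inE => /and4P[_ /subsetP DR _ _].
rewrite /taubar /taubar_cluster /arm_contrast -sumrB; congr (_ * _); apply: eq_bigr => c _ /=.
rewrite /in_arm /arm /Rset /Dset !inE.
case cD: (c \in w.1.2); first by rewrite DR //= /ind /=; ring.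
by case: (c \in w.1.1); rewrite /ind /=; ring.
Qed.

Lemma avg_taubar_cluster : avg D taubar_cluster = tau Y1 Y0.
Proof.
rewrite /taubar_cluster (avg_arm_contrast (ltnW S1_lt_S) S_le_C) /= -pi1E -pi0E (tauE C_neq0) /Ybar.
rewrite -!big_distrl /=.
(* abstracting pi1 and pi0 keeps field from unfolding them into p_ and q_ *)
move: pi1_neq0 pi0_neq0; generalize pi1 pi0 => p1 p0 p10 p00.
by field; rewrite p10 p00 C_neq0.
Qed.

Lemma var_taubar_cluster :
  cov D taubar_cluster taubar_cluster = var_taubar_formula S S1 Y1 Y0.
Proof.
rewrite /taubar_cluster (var_arm_contrast (ltnW S1_lt_S) S_le_C) /= -pi1E -pi0E !sum_centered_divr.
have tau_dev : \sum_c (tau_c Y1 Y0 c - tau Y1 Y0) ^+ 2 =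
    \sum_c ((YtC Y1 c - Ybar Y1) - (YtC Y0 c - Ybar Y0)) ^+ 2.
  by apply: eq_bigr => c _; rewrite /tau_c (tauE C_neq0); congr (_ ^+ 2); ring.
rewrite /var_taubar_formula tau_dev sum_sqrB !sum_sqr /Ybar.
move: pi1_neq0 pi0_neq0; generalize pi1 pi0 => p1 p0 p10 p00.
by field; rewrite p10 p00 C_neq0 C1_neq0.
Qed.

Lemma Exp_taubar : Exp S S1 n (taubar S S1 Y1 Y0) = tau Y1 Y0.
Proof.
rewrite ExpE (eq_avg (fun w => @taubar_on_design w)) designE.
by rewrite avg_setX_fst ?unit_design_neq0 // avg_taubar_cluster.
Qed.

Lemma Var_taubar : Var S S1 n (taubar S S1 Y1 Y0) = var_taubar_formula S S1 Y1 Y0.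
Proof.
rewrite VarE ?design_neq0 // (eq_cov (fun w => @taubar_on_design w) (fun w => @taubar_on_design w)).
by rewrite designE cov_setX_fst ?unit_design_neq0 // var_taubar_cluster.
Qed.

Hypothesis n_gt0 : forall c, (0 < n c)%N.

Let pi_neq0 c : pi_ R N n c != 0.
Proof. by rewrite /pi_ mulf_neq0 ?invr_eq0 // pnatr_eq0 -lt0n. Qed.

Definition ht_weight (x : {set 'I_C} * {set 'I_C}) (c : 'I_C) (i : 'I_(N c)) : R :=
  in_arm R c true x * (Yt Y1 i / (pi1 * pi_ R N n c)) -
  in_arm R c false x * (Yt Y0 i / (pi0 * pi_ R N n c)).

Definition ht_estimator (x : {set 'I_C} * {set 'I_C}) (W : {set unit_t N}) : R :=
  C%:R^-1 * \sum_(c < C) \sum_(i < N c) ht_weight x i * sampled R (unit_of i) W.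

Lemma tauhat_on_design w :
  w \in design N S S1 n -> tauhat S S1 n Y1 Y0 w = ht_estimator w.1 w.2.
Proof.
rewrite inE => /and4P[_ /subsetP DR _ _].
rewrite /tauhat -(Nbar_mulC N C_neq0) invfM [_ * C%:R^-1]mulrC -mulrA; congr (_ * _).
rewrite big_distrr; apply: eq_bigr => c _ /=.
rewrite /ht_weight /in_arm /arm /sampled /Rset /Dset /Wset !inE.
case cD: (c \in w.1.2); [rewrite DR // | case: (c \in w.1.1)];
  rewrite /ind /= !big_distrr -sumrB big_distrr /=;
  by apply: eq_bigr => i _; rewrite /Yt !invfM; ring.
Qed.

Lemma avg_ht_estimator x : avg B (ht_estimator x) = taubar_cluster x.
Proof.
rewrite avgZ avg_sum /taubar_cluster /arm_contrast -sumrB; congr (_ * _); apply: eq_bigr => c _.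
rewrite (avg_HT n_le_N) /ht_weight sumrB -!big_distrr /YtC /Yt -!big_distrl /=.
move: (pi_neq0 c) pi1_neq0 pi0_neq0.
generalize (pi_ R N n c) pi1 pi0 => pc p1 p0 pc0 p10 p00.
by field; rewrite pc0 p10 p00 Nbar_neq0.
Qed.

Lemma var_ht_estimator x :
  cov B (ht_estimator x) (ht_estimator x) =
  C%:R^-1 ^+ 2 * \sum_(c < C) pi_ R N n c * (1 - pi_ R N n c) * (N c)%:R / ((N c)%:R - 1) *
    ((\sum_(i < N c) (Yt Y1 i - YtCbar Y1 c) * (Yt Y1 i - YtCbar Y1 c)) /
       ((pi1 * pi_ R N n c) * (pi1 * pi_ R N n c)) * in_arm R c true x +
     (\sum_(i < N c) (Yt Y0 i - YtCbar Y0 c) * (Yt Y0 i - YtCbar Y0 c)) /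
       ((pi0 * pi_ R N n c) * (pi0 * pi_ R N n c)) * in_arm R c false x).
Proof.
rewrite /ht_estimator covZl covC covZl (var_HT n_le_N) mulrA -expr2; congr (_ * _).
apply: eq_bigr => c _; rewrite (var_HT_cluster n_le_N) /ht_weight.
by rewrite sum_centered_mix ?in_arm_mul ?mul0r ?mul1r // !sum_centered_divr.
Qed.

Lemma avg_var_ht_estimator :
  avg D (fun x => cov B (ht_estimator x) (ht_estimator x)) = within_term S S1 n Y1 Y0.
Proof.
rewrite (eq_avg (fun x _ => var_ht_estimator x)) avgZ avg_sum /within_term exprVn.
congr (_ * _); apply: eq_bigr => c _.
rewrite avgZ avgD !avgZ !(avg_in_arm _ (ltnW S1_lt_S) S_le_C) -pi1E -pi0E.
rewrite /pit_ -(HT_within_factor R (n_gt0 c) (n_le_N c)) -/(pi_ R N n c).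
rewrite !sum_sqr (sum_sqr (fun i => Yt Y0 i - YtCbar Y0 c)).
(* (N c - 1)^-1 stays abstract: it is 0 when N c = 1 and is a factor of both sides *)
move: (pi_neq0 c) pi1_neq0 pi0_neq0.
generalize (pi_ R N n c) pi1 pi0 (((N c)%:R - 1)^-1 : R) => pc p1 p0 t pc0 p10 p00.
by field; rewrite pc0 p10 p00.
Qed.

Lemma Exp_tauhat : Exp S S1 n (tauhat S S1 n Y1 Y0) = tau Y1 Y0.
Proof.
rewrite ExpE (eq_avg (fun w => @tauhat_on_design w)) designE avg_setX /=.
by rewrite (eq_avg (fun x _ => avg_ht_estimator x)) avg_taubar_cluster.
Qed.

Lemma Var_tauhat :
  Var S S1 n (tauhat S S1 n Y1 Y0) = var_taubar_formula S S1 Y1 Y0 + within_term S S1 n Y1 Y0.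
Proof.
rewrite VarE ?design_neq0 // (eq_cov (fun w => @tauhat_on_design w) (fun w => @tauhat_on_design w)).
rewrite designE cov_setX /= avg_var_ht_estimator addrC; congr (_ + _).
rewrite -var_taubar_cluster; apply: eq_cov => x _; exact: avg_ht_estimator.
Qed.

End Estimators.

Theorem proposition1 (R : realFieldType) (C : nat) (N : 'I_C -> nat)
    (Y1 Y0 : forall c : 'I_C, 'I_(N c) -> R) (S S1 : nat) (n : 'I_C -> nat)
    (hN : forall c, (0 < N c)%N) (hn : forall c, (n c <= N c)%N)
    (hp : (0 < S <= C)%N) (hq : (0 < S1 < S)%N) :
  Exp S S1 n (taubar S S1 Y1 Y0) = tau Y1 Y0 /\
  Var S S1 n (taubar S S1 Y1 Y0) = var_taubar_formula S S1 Y1 Y0 /\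
  ((forall c, (0 < n c)%N) ->
     Exp S S1 n (tauhat S S1 n Y1 Y0) = tau Y1 Y0 /\
     Var S S1 n (tauhat S S1 n Y1 Y0) =
       var_taubar_formula S S1 Y1 Y0 + within_term S S1 n Y1 Y0).
Proof.
case/andP: hp => S_gt0 S_le_C; case/andP: hq => S1_gt0 S1_lt_S.
split; first exact: Exp_taubar.
split; first exact: Var_taubar.
by move=> n_gt0; split; [exact: Exp_tauhat | exact: Var_tauhat].
Qed.
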